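(* Let $L$ be a finite-dimensional nilpotent Lie superalgebra with $\dim L'=(r\mid s)$ where $r+s=1$, and suppose $\dim_{\mathbb{F}} L/Z(L)>2$ (total dimension). Then $L$ is not capable.
   Context: All algebras are over a field $\mathbb{F}$ of characteristic $\neq 2,3$. $L'=[L,L]$, $Z(L)$ is the center, $\dim L=(m\mid n)$ means even part of dimension $m$ and odd part of dimension $n$. A Lie superalgebra $L$ is capable if $L\cong H/Z(H)$ for some Lie superalgebra $H$. *)

From HB Require Import structures.
From mathcomp Require Import all_boot all_order all_algebra.
Set Implicit Arguments. Unset Strict Implicit. Unset Printing Implicit Defensive.
Import GRing.Theory.
Local Open Scope ring_scope.

(* A super vector space over F is represented as V0 * V1 (even part V0,
   odd part V1).  An element x is homogeneous of degree b (false = even,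
   true = odd) when its component of the other parity vanishes. *)
Definition homog (F : fieldType) (V0 V1 : lmodType F) (b : bool) (x : V0 * V1) : bool :=
  if b then x.1 == 0 else x.2 == 0.

Record is_lie_superalgebra (F : fieldType) (V0 V1 : lmodType F)
    (br : V0 * V1 -> V0 * V1 -> V0 * V1) : Prop := {
  br_linl : forall (a : F) x y z, br (a *: x + y) z = a *: br x z + br y z;
  br_linr : forall (a : F) x y z, br z (a *: x + y) = a *: br z x + br z y;
  br_grade : forall a b x y, homog a x -> homog b y -> homog (a (+) b) (br x y);
  br_superanti : forall a b x y, homog a x -> homog b y ->
     br x y = - (((-1 : F) ^+ (a && b)) *: br y x);
  br_superjacobi : forall a b c x y z, homog a x -> homog b y -> homog c z ->
     ((-1 : F) ^+ (a && c)) *: br x (br y z)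
   + ((-1 : F) ^+ (b && a)) *: br y (br z x)
   + ((-1 : F) ^+ (c && b)) *: br z (br x y) = 0
}.

Section FinDim.
Variables (F : fieldType) (V0 V1 : vectType F).
Variable br : V0 * V1 -> V0 * V1 -> V0 * V1.

Definition even_part : {vspace V0 * V1} := lker (linfun (fun x : V0 * V1 => x.2)).
Definition odd_part : {vspace V0 * V1} := lker (linfun (fun x : V0 * V1 => x.1)).

Fixpoint lcs (k : nat) : {vspace V0 * V1} :=
  match k with
  | 0 => fullv
  | k'.+1 => (<< [seq br x y | x <- vbasis (lcs k'), y <- vbasis fullv] >>)%VS
  end.

Definition derived : {vspace V0 * V1} := lcs 1.

Definition nilpotent : Prop := exists k, lcs k = 0%VS.

Definition centre : {vspace V0 * V1} :=
  (\bigcap_(i < \dim (fullv : {vspace V0 * V1}))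
      lker (linfun (fun x => br x (tnth (vbasis fullv) i))))%VS.

End FinDim.

(* L is capable: L is isomorphic to H / Z(H) for some Lie superalgebra H
   (arbitrary, possibly infinite-dimensional), expressed via the first
   isomorphism theorem: an even surjective homomorphism H -> L with kernel Z(H). *)
Definition capable (F : fieldType) (V0 V1 : lmodType F)
    (br : V0 * V1 -> V0 * V1 -> V0 * V1) : Prop :=
  exists (H0 H1 : lmodType F) (brH : H0 * H1 -> H0 * H1 -> H0 * H1)
         (f : H0 * H1 -> V0 * V1),
    is_lie_superalgebra brH /\
    [/\ (forall (a : F) x y, f (a *: x + y) = a *: f x + f y),
        (forall b x, homog b x -> homog b (f x)),
        (forall x y, f (brH x y) = br (f x) (f y)),
        (forall v, exists h, f h = v)
      & (forall h, f h = 0 <-> (forall k, brH h k = 0))].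

(* Since dim L' = 1, every map [x, -] has rank at most 1, so centralizers have
   codimension at most 1.  If the centralizer C of some k were abelian, then for
   u outside C every x in C with [x, u] = 0 would commute with C + Fu = L, which
   puts a subspace of codimension at most 2 inside Z(L), against
   dim L/Z(L) > 2.  Hence every centralizer contains homogeneous a, b with
   [a, b] spanning L'.
   Now let pi : H -> L be onto with kernel Z(H) and let z = [x~, y~] lift a
   generator of L'.  For homogeneous k in H choose such a, b in the centralizer
   of pi(k) and lift them to a~, b~: then [b~, k] and [k, a~] are central, so the
   super Jacobi identity gives [k, [a~, b~]] = 0; as [a~, b~] is in
   lam z + Z(H) with lam <> 0, also [k, z] = 0.  Thus z lies in Z(H) = ker pi,
   although pi(z) <> 0. *)

From HB Require Import structures.
From mathcomp Require Import all_boot all_order all_algebra.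
From Stdlib Require Import Classical.
From mathcomp Require Import zify.
Set Implicit Arguments. Unset Strict Implicit. Unset Printing Implicit Defensive.
Import GRing.Theory.
Local Open Scope ring_scope.

Section AdditiveMap.
Variables (F : fieldType) (U V : lmodType F) (g : U -> V).
Hypothesis g_lin : forall (a : F) x y, g (a *: x + y) = a *: g x + g y.

Lemma linD x y : g (x + y) = g x + g y.
Proof. by have := g_lin 1 x y; rewrite !scale1r. Qed.

Lemma lin0 : g 0 = 0.
Proof. by apply: (addrI (g 0)); rewrite -linD !addr0. Qed.

Lemma linZ a x : g (a *: x) = a *: g x.
Proof. by have := g_lin a x 0; rewrite !addr0 lin0 addr0. Qed.

Lemma linB x y : g (x - y) = g x - g y.
Proof. by rewrite linD -scaleN1r linZ scaleN1r. Qed.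

End AdditiveMap.

Lemma linfunE (F : fieldType) (aT rT : vectType F) (f : aT -> rT) :
  (forall (a : F) x y, f (a *: x + y) = a *: f x + f y) -> linfun f =1 f.
Proof.
move=> f_lin.
exact: (lfunE (HB.pack f (GRing.isLinear.Build _ _ _ _ f f_lin))).
Qed.

Definition hcomp (F : fieldType) (V0 V1 : lmodType F) (b : bool) (x : V0 * V1) :
  V0 * V1 := if b then (0, x.2) else (x.1, 0).

Section HomogeneousComponents.
Variables (F : fieldType) (V0 V1 : lmodType F).
Implicit Types x y : V0 * V1.

Lemma homog_hcomp b x : homog b (hcomp b x).
Proof. by case: b; rewrite /homog /hcomp /=. Qed.

Lemma hcomp_split x : x = hcomp false x + hcomp true x.
Proof. by case: x => u v; rewrite /hcomp /GRing.add /=; congr pair; rewrite ?addr0 ?add0r. Qed.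

Lemma hcompD b x y : hcomp b (x + y) = hcomp b x + hcomp b y.
Proof. by case: b; rewrite /hcomp /GRing.add /=; congr pair; rewrite ?addr0. Qed.

Lemma homog0 b : homog b (0 : V0 * V1).
Proof. by case: b; rewrite /homog /=. Qed.

Lemma hcomp0 b : hcomp b (0 : V0 * V1) = 0.
Proof. by case: b. Qed.

Lemma hcomp_homog a b x : homog a x -> hcomp b x = if a == b then x else 0.
Proof. by case: x => u v; case: a; case: b; rewrite /homog /hcomp /= => /eqP ->. Qed.

End HomogeneousComponents.

Section LieSuperalgebra.
Variables (F : fieldType) (V0 V1 : lmodType F).
Variable br : V0 * V1 -> V0 * V1 -> V0 * V1.
Hypothesis Hl : is_lie_superalgebra br.
Implicit Types x y z c k : V0 * V1.

Lemma brDl x y z : br (x + y) z = br x z + br y z.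
Proof. exact: (linD (g := br^~ z) (fun a x y => br_linl Hl a x y z)). Qed.

Lemma brDr x y z : br z (x + y) = br z x + br z y.
Proof. exact: (linD (g := br z) (fun a x y => br_linr Hl a x y z)). Qed.

Lemma brZr a x z : br z (a *: x) = a *: br z x.
Proof. exact: (linZ (g := br z) (fun a x y => br_linr Hl a x y z)). Qed.

Lemma br_hcompE x y :
  br x y = br (hcomp false x) (hcomp false y) + br (hcomp false x) (hcomp true y)
         + br (hcomp true x) (hcomp false y) + br (hcomp true x) (hcomp true y).
Proof. by rewrite {1}(hcomp_split x) {1}(hcomp_split y) brDl !brDr !addrA. Qed.

Lemma br_hcomp_neq0 x y : br x y != 0 -> exists a b, br (hcomp a x) (hcomp b y) != 0.
Proof.
have [e1|] := eqVneq (br (hcomp false x) (hcomp false y)) 0; last by exists false, false.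
have [e2|] := eqVneq (br (hcomp false x) (hcomp true y)) 0; last by exists false, true.
have [e3|] := eqVneq (br (hcomp true x) (hcomp false y)) 0; last by exists true, false.
have [e4|] := eqVneq (br (hcomp true x) (hcomp true y)) 0; last by exists true, true.
by rewrite br_hcompE e1 e2 e3 e4 !addr0 eqxx.
Qed.

Lemma hcomp_brr g b k x : homog g k -> hcomp (g (+) b) (br k x) = br k (hcomp b x).
Proof.
move=> hk; rewrite {1}(hcomp_split x) brDr hcompD.
rewrite !(hcomp_homog _ (br_grade Hl hk (homog_hcomp _ _))).
by case: g b {hk} => [] []; rewrite /= ?addr0 ?add0r.
Qed.

Lemma hcomp_brl g b k x : homog g k -> hcomp (b (+) g) (br x k) = br (hcomp b x) k.
Proof.
move=> hk; rewrite {1}(hcomp_split x) brDl hcompD.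
rewrite !(hcomp_homog _ (br_grade Hl (homog_hcomp _ _) hk)).
by case: g b {hk} => [] []; rewrite /= ?addr0 ?add0r.
Qed.

Lemma br_hcompr_eq0 g b k x : homog g k -> br k x = 0 -> br k (hcomp b x) = 0.
Proof. by move=> hk e; rewrite -(hcomp_brr b x hk) e hcomp0. Qed.

Lemma br_eq0_sym a b x y : homog a x -> homog b y -> br x y = 0 -> br y x = 0.
Proof. by move=> hx hy e; rewrite (br_superanti Hl hy hx) e scaler0 oppr0. Qed.

Definition central c := forall k, br c k = 0.

Lemma central_hcomp b c : central c -> central (hcomp b c).
Proof.
move=> cc k; rewrite (hcomp_split k) brDr.
by rewrite -!(hcomp_brl b c (homog_hcomp _ _)) !cc !hcomp0 addr0.
Qed.

Lemma central_brr c k : central c -> br k c = 0.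
Proof.
move=> cc; have e a b : br (hcomp a k) (hcomp b c) = 0.
  exact: br_eq0_sym (homog_hcomp b c) (homog_hcomp a k) (central_hcomp b cc _).
by rewrite (hcomp_split c) (hcomp_split k) brDr !brDl !e !addr0.
Qed.

Lemma central_homog g c : homog g c -> (forall b k, homog b k -> br k c = 0) -> central c.
Proof.
move=> hc h k; rewrite (hcomp_split k) brDr.
by rewrite !(br_eq0_sym (homog_hcomp _ k) hc (h _ _ (homog_hcomp _ k))) addr0.
Qed.

Lemma jacobi_central a b g x y z : homog a x -> homog b y -> homog g z ->
  central (br y z) -> central (br z x) -> br z (br x y) = 0.
Proof.
move=> hx hy hz cyz czx; have J := br_superjacobi Hl hx hy hz.
rewrite (central_brr x cyz) (central_brr y czx) !scaler0 !add0r in J.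
by move/eqP: J; rewrite scaler_eq0 signr_eq0 => /eqP.
Qed.

End LieSuperalgebra.

Section GradedSurjection.
Variables (F : fieldType) (H0 H1 V0 V1 : lmodType F) (f : H0 * H1 -> V0 * V1).
Hypothesis f_lin : forall (a : F) x y, f (a *: x + y) = a *: f x + f y.
Hypothesis f_homog : forall b x, homog b x -> homog b (f x).
Hypothesis f_surj : forall v, exists h, f h = v.

Lemma graded_hcomp b h : f (hcomp b h) = hcomp b (f h).
Proof.
rewrite {2}(hcomp_split h) (linD f_lin) hcompD.
rewrite !(hcomp_homog _ (f_homog (homog_hcomp _ h))).
by case: b; rewrite /= ?addr0 ?add0r.
Qed.

Lemma lift_homog b v : homog b v -> exists2 h, homog b h & f h = v.
Proof.
have [h <-] := f_surj v => hv; exists (hcomp b h); first exact: homog_hcomp.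
by rewrite graded_hcomp (hcomp_homog _ hv) eqxx.
Qed.

End GradedSurjection.

Section Codimension.
Variables (F : fieldType) (aT rT : vectType F).
Local Notation n := (\dim (fullv : {vspace aT})).

Lemma dim_lker_codim1 (f : 'Hom(aT, rT)) : (\dim (limg f) <= 1)%N -> (n <= \dim (lker f) + 1)%N.
Proof. by have := limg_ker_dim f fullv; rewrite capfv => <-; rewrite leq_add2l. Qed.

Lemma dim_cap_codim1 (U W : {vspace aT}) :
  (n <= \dim U + 1)%N -> (n <= \dim W + 1)%N -> (n <= \dim (U :&: W) + 2)%N.
Proof. by have := dimv_sum_cap U W; have := dimvS (subvf (U + W)%VS); lia. Qed.

Lemma subv_codim1_full (W S : {vspace aT}) u :
  (n <= \dim W + 1)%N -> (W <= S)%VS -> u \in S -> u \notin W -> S = fullv.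
Proof.
move=> codimW sWS uS uW; apply/eqP; rewrite eqEdim subvf /=.
have : \dim W != \dim S by rewrite (dimv_leqif_eq sWS); apply: contraNneq uW => ->.
by have := dimvS sWS; lia.
Qed.

End Codimension.

Section FiniteDimensional.
Variables (F : fieldType) (V0 V1 : vectType F).
Variable br : V0 * V1 -> V0 * V1 -> V0 * V1.
Hypothesis Hl : is_lie_superalgebra br.
Implicit Types x y : V0 * V1.

Definition adl x : 'End((V0 * V1)%type) := linfun (br x).
Definition adr x : 'End((V0 * V1)%type) := linfun (br^~ x).

Lemma adlE x y : adl x y = br x y.
Proof. exact: (linfunE (fun a u v => br_linr Hl a u v x)). Qed.

Lemma adrE x y : adr x y = br y x.
Proof. exact: (linfunE (fun a u v => br_linl Hl a u v x)). Qed.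

Lemma mem_derived x y : br x y \in derived br.
Proof.
rewrite (coord_vbasis (memvf x)) -adrE raddf_sum /=.
apply: memv_suml => i _; rewrite linearZ /= adrE; apply: memvZ.
rewrite (coord_vbasis (memvf y)) -adlE raddf_sum /=.
apply: memv_suml => j _; rewrite linearZ /= adlE; apply: memvZ.
by apply: memv_span; apply: allpairs_f; apply: mem_nth; rewrite size_tuple.
Qed.

Lemma derived_subv (U : {vspace V0 * V1}) :
  (forall x y, br x y \in U) -> (derived br <= U)%VS.
Proof. by move=> brU; apply/span_subvP => v /allpairsP [[x y] [_ _ ->]]. Qed.

Lemma mem_hcomp_derived b x y : hcomp b (br x y) \in derived br.
Proof.
have hcomp_br a c : hcomp b (br (hcomp a x) (hcomp c y)) \in derived br.
  rewrite (hcomp_homog _ (br_grade Hl (homog_hcomp a x) (homog_hcomp c y))).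
  by case: ifP => _; [exact: mem_derived | exact: mem0v].
by rewrite (br_hcompE Hl x y) !hcompD !memvD ?hcomp_br.
Qed.

Lemma dim_derived_eq1 :
  (\dim (derived br :&: even_part V0 V1) + \dim (derived br :&: odd_part V0 V1) = 1)%N ->
  \dim (derived br) = 1%N.
Proof.
set D := derived br; set DE := (D :&: _)%VS; set DO := (D :&: _)%VS => dim_sum.
have graded : (D <= DE + DO)%VS.
  apply: derived_subv => x y; rewrite (hcomp_split (br x y)).
  apply: memv_add; rewrite /DE /DO memv_cap mem_hcomp_derived memv_ker linfunE //= eqxx.
have := dimvS graded; have := dimv_sum_cap DE DO.
have := dimvS (capvSl D (even_part V0 V1)); have := dimvS (capvSl D (odd_part V0 V1)).
by rewrite -/DE -/DO; lia.
Qed.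

Lemma central_mem_centre x : central br x -> x \in centre br.
Proof.
move=> cx; rewrite /centre memvE; apply/subv_bigcapP => i _.
by rewrite -memvE memv_ker linfunE ?cx // => a u v; apply: br_linl.
Qed.

End FiniteDimensional.

Section OneDimensionalDerived.
Variables (F : fieldType) (V0 V1 : vectType F).
Variable br : V0 * V1 -> V0 * V1 -> V0 * V1.
Hypothesis Hl : is_lie_superalgebra br.
Hypothesis dim_derived1 : \dim (derived br) = 1%N.
Implicit Types x y : V0 * V1.
Local Notation n := (\dim (fullv : {vspace V0 * V1})).

Lemma derived_line x y : br x y != 0 -> derived br = <[br x y]>%VS.
Proof.
move=> nz; apply/eqP; rewrite eq_sym eqEdim -memvE mem_derived //.
by rewrite dim_vline nz dim_derived1.
Qed.

Lemma codim_lker_adl x : (n <= \dim (lker (adl br x)) + 1)%N.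
Proof.
apply: dim_lker_codim1; rewrite -dim_derived1 dimvS //.
by apply/subvP => _ /memv_imgP [y _ ->]; rewrite adlE // mem_derived.
Qed.

Lemma codim_lker_adr x : (n <= \dim (lker (adr br x)) + 1)%N.
Proof.
apply: dim_lker_codim1; rewrite -dim_derived1 dimvS //.
by apply/subvP => _ /memv_imgP [y _ ->]; rewrite adrE // mem_derived.
Qed.

Lemma abelian_centralizer_cap_centre k u :
  {in lker (adl br k) &, forall a b, br a b = 0} -> u \notin lker (adl br k) ->
  (lker (adl br k) :&: lker (adr br u) <= centre br)%VS.
Proof.
move=> abelian uW; apply/subvP => x.
rewrite memv_cap !memv_ker adlE // adrE // => /andP [/eqP kx /eqP xu].
have xW : x \in lker (adl br k) by rewrite memv_ker adlE // kx.
have Sx : lker (adl br x) = fullv.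
  apply: (subv_codim1_full (codim_lker_adl k) _ _ uW); last by rewrite memv_ker adlE // xu.
  by apply/subvP => w wW; rewrite memv_ker adlE // abelian.
apply: central_mem_centre => // y.
by have := memvf y; rewrite -Sx memv_ker adlE // => /eqP.
Qed.

Hypothesis codim_centre : (2 < n - \dim (centre br))%N.

Lemma centralizer_not_abelian k :
  exists a b, [/\ br k a = 0, br k b = 0 & br a b != 0].
Proof.
apply: NNPP => no_pair.
have abelian : {in lker (adl br k) &, forall a b, br a b = 0}.
  move=> a b; rewrite !memv_ker !adlE // => /eqP ka /eqP kb.
  by have [//|nz] := eqVneq (br a b) 0; case: no_pair; exists a, b.
have [W_full | /subvPn [u _ uW]] := boolP (fullv <= lker (adl br k))%VS.
  have D0 : (derived br <= 0)%VS.
    by apply: derived_subv => x y; rewrite memv0 abelian ?(subvP W_full) ?memvf.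
  by have := dimvS D0; rewrite dimv0 dim_derived1.
have n_le := leq_trans (dim_cap_codim1 (codim_lker_adl k) (codim_lker_adr u))
  (leq_add (dimvS (abelian_centralizer_cap_centre abelian uW)) (leqnn 2)).
move: codim_centre; rewrite ltn_subRL => /leq_trans/(_ n_le).
by rewrite addnC ltnn.
Qed.

Lemma homog_centralizer_not_abelian g k : homog g k ->
  exists al be a b, [/\ homog al a, homog be b, br k a = 0, br k b = 0 & br a b != 0].
Proof.
move=> hk; have [a [b [ka kb nz]]] := centralizer_not_abelian k.
have [al [be nz']] := br_hcomp_neq0 Hl nz.
exists al, be, (hcomp al a), (hcomp be b).
by split; rewrite ?homog_hcomp ?(br_hcompr_eq0 Hl _ hk).
Qed.

End OneDimensionalDerived.

Section CentralExtension.
Variables (F : fieldType) (V0 V1 : vectType F) (H0 H1 : lmodType F).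
Variable br : V0 * V1 -> V0 * V1 -> V0 * V1.
Hypothesis Hl : is_lie_superalgebra br.
Hypothesis dim_derived1 : \dim (derived br) = 1%N.
Hypothesis codim_centre : (2 < \dim (fullv : {vspace V0 * V1}) - \dim (centre br))%N.
Variable brH : H0 * H1 -> H0 * H1 -> H0 * H1.
Hypothesis HlH : is_lie_superalgebra brH.
Variable f : H0 * H1 -> V0 * V1.
Hypothesis f_lin : forall (a : F) x y, f (a *: x + y) = a *: f x + f y.
Hypothesis f_homog : forall b x, homog b x -> homog b (f x).
Hypothesis f_br : forall x y, f (brH x y) = br (f x) (f y).
Hypothesis f_surj : forall v, exists h, f h = v.
Hypothesis f_ker : forall h, f h = 0 <-> central brH h.

Lemma lift_br_central al be xh yh : homog al xh -> homog be yh ->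
  br (f xh) (f yh) != 0 -> central brH (brH xh yh).
Proof.
move=> hxh hyh nz; set zh := brH xh yh.
apply: (central_homog HlH (br_grade HlH hxh hyh)) => g k hk.
have [al' [be' [a [b [ha hb ka kb nz_ab]]]]] :=
  homog_centralizer_not_abelian Hl dim_derived1 codim_centre (f_homog hk).
have [ah hah fah] := lift_homog f_lin f_homog f_surj ha.
have [bh hbh fbh] := lift_homog f_lin f_homog f_surj hb.
have central_bk : central brH (brH bh k).
  by apply/f_ker; rewrite f_br fbh (br_eq0_sym Hl (f_homog hk) hb kb).
have central_ka : central brH (brH k ah) by apply/f_ker; rewrite f_br fah.
have k_ab := jacobi_central HlH hah hbh hk central_bk central_ka.
have [lam e_ab] : exists lam, br a b = lam *: br (f xh) (f yh).
  by apply/vlineP; rewrite -derived_line // mem_derived.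
have lam_neq0 : lam != 0 by move: nz_ab; rewrite e_ab; apply: contraNneq => ->; rewrite scale0r.
have central_c : central brH (brH ah bh - lam *: zh).
  by apply/f_ker; rewrite (linB f_lin) (linZ f_lin) !f_br fah fbh e_ab subrr.
move: k_ab; rewrite -(subrK (lam *: zh) (brH ah bh)) brDr // (central_brr HlH _ central_c).
by rewrite add0r brZr // => /eqP; rewrite scaler_eq0 (negbTE lam_neq0) => /eqP.
Qed.

End CentralExtension.

Unset Implicit Arguments.

Theorem mainTheorem7 (F : fieldType) (V0 V1 : vectType F)
    (br : V0 * V1 -> V0 * V1 -> V0 * V1) :
  (2%:R : F) != 0 -> (3%:R : F) != 0 ->
  is_lie_superalgebra br ->
  nilpotent br ->
  (\dim (derived br :&: even_part V0 V1) + \dim (derived br :&: odd_part V0 V1) = 1)%N ->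
  (2 < \dim (fullv : {vspace V0 * V1}) - \dim (centre br))%N ->
  ~ capable br.
Proof.
move=> _ _ Hl _ dim_sum codim_centre [H0 [H1 [brH [f [HlH [f_lin f_homog f_br f_surj f_ker]]]]]].
have dim_derived1 := dim_derived_eq1 Hl dim_sum.
have [al [be [x [y [hx hy _ _ nz]]]]] :=
  homog_centralizer_not_abelian Hl dim_derived1 codim_centre (homog0 _ _ false).
have [xh hxh fxh] := lift_homog f_lin f_homog f_surj hx.
have [yh hyh fyh] := lift_homog f_lin f_homog f_surj hy.
have := lift_br_central Hl dim_derived1 codim_centre HlH f_lin f_homog f_br f_surj f_ker hxh hyh.
rewrite fxh fyh => /(_ nz) /f_ker.
by rewrite f_br fxh fyh => /eqP; rewrite (negbTE nz).
Qed.
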